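(* Let $R$ be a commutative ring and $\mathcal A$ an $R$-algebra whose structure map $R\to\mathcal A$ is injective (so $R\subseteq\mathcal A$). Then $\mathcal A$ is a strongly simple $R$-algebra if and only if the following three statements hold: (i) $R$ is an integral domain; (ii) $\mathcal A\simeq K_R$ as $R$-algebras; (iii) $K_R$ as an $R$-algebra is strongly simple.
   Context: Algebras are associative, unital and nonzero. $K_R$ denotes the field of fractions of an integral domain $R$. An $R$-submodule $M$ of $\mathcal A$ is a (two-sided) Mathieu subspace if whenever $a\in\mathcal A$ satisfies $a^m\in M$ for all $m\ge1$, then for all $b,c\in\mathcal A$ there is $N$ with $ba^mc\in M$ for all $m\ge N$. $\mathcal A$ is a strongly simple $R$-algebra if its only Mathieu subspaces are $0$ and $\mathcal A$. *)

From HB Require Import structures.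
From mathcomp Require Import all_boot all_algebra.
Set Implicit Arguments. Unset Strict Implicit. Unset Printing Implicit Defensive.
Import GRing.Theory.
Local Open Scope ring_scope.

(* Mathieu subspaces and strong simplicity for a ring [A] on which a
   commutative ring [R] acts by a scalar action [act] (for an R-algebra,
   [act] is [*:%R]; for a field K receiving R via f, it is [fun r x => f r * x]). *)

Definition is_submodule (R : comNzRingType) (A : nzRingType)
  (act : R -> A -> A) (M : A -> Prop) : Prop :=
  [/\ M 0,
      (forall x y, M x -> M y -> M (x + y)) &
      (forall (r : R) x, M x -> M (act r x))].

Definition is_Mathieu_subspace (R : comNzRingType) (A : nzRingType)
  (act : R -> A -> A) (M : A -> Prop) : Prop :=
  is_submodule act M /\
  forall a : A, (forall m : nat, (1 <= m)%N -> M (a ^+ m)) ->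
    forall b c : A, exists N : nat, forall m : nat, (N <= m)%N -> M (b * a ^+ m * c).

Definition strongly_simple_act (R : comNzRingType) (A : nzRingType)
  (act : R -> A -> A) : Prop :=
  forall M : A -> Prop, is_Mathieu_subspace act M ->
    (forall x, M x <-> x = 0) \/ (forall x, M x).

Definition strongly_simple (R : comNzRingType) (A : algType R) : Prop :=
  strongly_simple_act (fun (r : R) (x : A) => r *: x).

Definition is_integral_domain (R : comNzRingType) : Prop :=
  forall x y : R, x * y = 0 -> x = 0 \/ y = 0.

Definition is_field_of_fractions (R : comNzRingType) (K : fieldType)
  (f : {rmorphism R -> K}) : Prop :=
  injective f /\ forall x : K, exists a b : R, f b != 0 /\ x = f a / f b.

Definition alg_iso_to (R : comNzRingType) (A : algType R) (K : fieldType)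
  (f : {rmorphism R -> K}) : Prop :=
  exists phi : {rmorphism A -> K},
    bijective phi /\ forall (r : R) (a : A), phi (r *: a) = f r * phi a.

(* A strongly simple algebra has no nonzero square-zero element, since the
   line R n it spans would be a Mathieu subspace; hence its idempotents are
   central, and since a central element z generates a two-sided ideal zA,
   which is a Mathieu subspace, every central element is 0 or a unit.  For
   any y, the line R y is then a Mathieu subspace unless y = s / r for scalars
   r, s: a power-closed element a = r1 y of R y yields t = r1^2 y with
   t^2 = r2 t, so t / r2 is an idempotent.  Thus A consists of fractions of
   scalars, so it is commutative and a field containing R, i.e. A is the
   fraction field of the domain R.  Conversely strong simplicity is
   transported along algebra isomorphisms. *)

From HB Require Import structures.
From mathcomp Require Import all_boot all_algebra.
From Stdlib Require Import Classical.
Set Implicit Arguments. Unset Strict Implicit. Unset Printing Implicit Defensive.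
Local Open Scope ring_scope.
Import GRing.Theory.

Definition central (A : nzRingType) (z : A) := forall b : A, GRing.comm z b.

Lemma central_rinv (A : nzRingType) (u w : A) :
  central u -> u * w = 1 -> w * u = 1 /\ central w.
Proof.
move=> cu uw; have wu : w * u = 1 by rewrite -cu.
split=> // b; rewrite /GRing.comm.
by rewrite -[w * b]mulr1 -uw mulrA -(mulrA w b) -cu mulrA wu mul1r.
Qed.

Section MathieuCriteria.
Variables (R : comNzRingType) (A : nzRingType) (act : R -> A -> A) (M : A -> Prop).
Hypothesis subM : is_submodule act M.

Lemma ideal_Mathieu :
  (forall a x, M x -> M (a * x)) -> (forall x b, M x -> M (x * b)) ->
  is_Mathieu_subspace act M.
Proof. by move=> ML MR; split=> // a Ha b c; exists 1%N => m m1; apply/MR/ML/Ha. Qed.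

Lemma nilpotent_Mathieu :
  (forall a, (forall m, (1 <= m)%N -> M (a ^+ m)) -> exists k, a ^+ k = 0) ->
  is_Mathieu_subspace act M.
Proof.
move=> nilM; split=> // a Ha b c; have [k ak] := nilM a Ha.
exists k => m km; rewrite -(subnKC km) exprD ak mul0r mulr0 mul0r.
by case: subM.
Qed.

End MathieuCriteria.

Lemma line_submodule (R : comNzRingType) (A : lalgType R) (y : A) :
  is_submodule (fun (r : R) (x : A) => r *: x) (fun x => exists r, x = r *: y).
Proof.
split; first by exists 0; rewrite scale0r.
- by move=> x z [r1 ->] [r2 ->]; exists (r1 + r2); rewrite scalerDl.
- by move=> r x [r1 ->]; exists (r * r1); rewrite scalerA.
Qed.

Definition is_fraction (R : comNzRingType) (A : algType R) (y : A) :=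
  exists r s : R, r%:A != 0 :> A /\ r *: y = s%:A.

Section StronglySimple.
Variables (R : comNzRingType) (A : algType R).
Hypothesis SS : strongly_simple A.

Lemma central_eq0_or_rinv (z : A) : central z -> z = 0 \/ exists w, z * w = 1.
Proof.
move=> cz; pose M x := exists w, x = z * w.
have MM : is_Mathieu_subspace (fun (r : R) (x : A) => r *: x) M.
  apply: ideal_Mathieu.
  - split; first by exists 0; rewrite mulr0.
    + by move=> x y [w1 ->] [w2 ->]; exists (w1 + w2); rewrite mulrDr.
    + by move=> r x [w ->]; exists (r *: w); rewrite scalerAr.
  - by move=> a x [w ->]; exists (a * w); rewrite mulrA -cz mulrA.
  - by move=> x b [w ->]; exists (w * b); rewrite mulrA.
have [M0|M1] := SS MM; first by left; apply/M0; exists 1; rewrite mulr1.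
by right; have [w w1] := M1 1; exists w.
Qed.

Lemma scalar_eq0_or_rinv (r : R) : r%:A = 0 :> A \/ exists w : A, r%:A * w = 1.
Proof. exact/central_eq0_or_rinv/comm_alg. Qed.

Lemma sqr_eq0 (n : A) : n * n = 0 -> n = 0.
Proof.
move=> nn; have n2 : n ^+ 2 = 0 by rewrite expr2.
have MM : is_Mathieu_subspace (fun (r : R) (x : A) => r *: x) (fun x => exists r, x = r *: n).
  apply: nilpotent_Mathieu; first exact: line_submodule.
  move=> a Ha; have [r] := Ha 1%N isT; rewrite expr1 => ->.
  by exists 2%N; rewrite exprZn n2 scaler0.
have [M0|M1] := SS MM; first by apply/M0; exists 1; rewrite scale1r.
have [r r1] := M1 1; have := congr1 (fun x : A => x ^+ 2) r1.
by rewrite /= expr1n exprZn n2 scaler0 => /eqP; rewrite oner_eq0.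
Qed.

(* The corners e A (1 - e) and (1 - e) A e square to zero, so e is central. *)
Lemma idempotent_eq0_or_1 (e : A) : e * e = e -> e = 0 \/ e = 1.
Proof.
move=> ee.
have e_1e : e * (1 - e) = 0 by rewrite mulrBr mulr1 ee subrr.
have _1e_e : (1 - e) * e = 0 by rewrite mulrBl mul1r ee subrr.
have ce : central e.
  move=> b; rewrite /GRing.comm.
  have /eqP : e * b * (1 - e) = 0.
    by apply: sqr_eq0; rewrite -!mulrA (mulrA (1 - e)) _1e_e mul0r !mulr0.
  rewrite mulrBr mulr1 subr_eq0 => /eqP ->.
  have /eqP : (1 - e) * b * e = 0.
    by apply: sqr_eq0; rewrite -!mulrA (mulrA e) e_1e mul0r !mulr0.
  by rewrite !mulrBl !mul1r subr_eq0 => /eqP.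
have [->|[w ew]] := central_eq0_or_rinv ce; first by left.
by right; rewrite -[e]mulr1 -ew mulrA ee.
Qed.

Lemma sqr_eq_scale (t : A) (r : R) : t * t = r%:A * t -> t = 0 \/ t = r%:A.
Proof.
move=> tt; have [r0|[w rw]] := scalar_eq0_or_rinv r.
  by left; apply: sqr_eq0; rewrite tt r0 mul0r.
have [wr cw] := central_rinv (comm_alg r) rw.
have t_rwt : t = r%:A * (w * t) by rewrite mulrA rw mul1r.
have ee : (w * t) * (w * t) = w * t.
  by rewrite -mulrA (mulrA t) -cw -mulrA tt (mulrA w r%:A) wr mul1r.
have [e0|e1] := idempotent_eq0_or_1 ee.
- by left; rewrite t_rwt e0 mulr0.
- by right; rewrite t_rwt e1 mulr1.
Qed.

Lemma line_powers_eq0_or_fraction (y a : A) (r1 r2 : R) :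
  a = r1 *: y -> a ^+ 2 = r2 *: y -> a = 0 \/ is_fraction y.
Proof.
move=> ay a2; have [r1_0|[w r1w]] := scalar_eq0_or_rinv r1.
  by left; rewrite ay -mulr_algl r1_0 mul0r.
have [wr1 _] := central_rinv (comm_alg r1) r1w.
have r1r1 : (r1 * r1)%:A = r1%:A * r1%:A :> A by rewrite mulr_algl scalerA.
pose t := (r1 * r1) *: y.
have t_a : t = r1%:A * a by rewrite ay mulr_algl scalerA.
have yy : (r1 * r1) *: (y * y) = r2 *: y.
  by rewrite -a2 ay expr2 -scalerAl -scalerAr scalerA.
have tt : t * t = r2%:A * t.
  by rewrite mulr_algl -scalerAl -scalerAr yy !scalerA mulrC.
have [t0|tr2] := sqr_eq_scale tt.
  by left; rewrite -[a]mul1r -wr1 -mulrA -t_a t0 mulr0.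
right; exists (r1 * r1), r2; split=> //; apply/eqP => r1r1_0.
have : (r1 * r1)%:A * (w * w) = 1 :> A.
  by rewrite r1r1 -mulrA (mulrA r1%:A w) r1w mul1r.
by rewrite r1r1_0 mul0r => /esym/eqP; rewrite oner_eq0.
Qed.

(* Unless y is a fraction, every power-closed element of R y vanishes, so
   R y is a Mathieu subspace; it is then 0 or A, and y is a fraction anyway. *)
Lemma strongly_simple_fraction (y : A) : is_fraction y.
Proof.
apply: NNPP => not_fy.
have MM : is_Mathieu_subspace (fun (r : R) (x : A) => r *: x) (fun x => exists r, x = r *: y).
  apply: nilpotent_Mathieu; first exact: line_submodule.
  move=> a Ha; have [r1 a1] := Ha 1%N isT; have [r2 a2] := Ha 2%N isT.
  rewrite expr1 in a1; exists 1%N; rewrite expr1.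
  by have [|//] := line_powers_eq0_or_fraction a1 a2.
apply: not_fy; have [M0|M1] := SS MM.
  have -> : y = 0 by apply/M0; exists 1; rewrite scale1r.
  by exists 1, 0; rewrite scale1r oner_neq0 scaler0 scale0r.
have [r r1] := M1 1; exists r, 1; rewrite -r1 scale1r; split=> //.
by apply: contra_neq (oner_neq0 A) => r0; rewrite r1 -mulr_algl r0 mul0r.
Qed.

Lemma strongly_simple_central (y : A) : central y.
Proof.
have [r [s [r_neq0 ry]]] := strongly_simple_fraction y.
have [r0|[w rw]] := scalar_eq0_or_rinv r; first by rewrite r0 eqxx in r_neq0.
have [wr cw] := central_rinv (comm_alg r) rw.
have -> : y = w * s%:A by rewrite -ry -mulr_algl mulrA wr mul1r.
by move=> b; rewrite /GRing.comm -mulrA comm_alg mulrA cw -mulrA.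
Qed.

Lemma strongly_simple_mulrC : commutative (@GRing.mul A).
Proof. exact: strongly_simple_central. Qed.

Lemma strongly_simple_rinv (x : A) : x != 0 -> exists w, x * w = 1.
Proof. by have [/eqP->|//] := central_eq0_or_rinv (strongly_simple_central x). Qed.

End StronglySimple.

Section CommRinvField.
Variables (A : nzRingType) (mulC : commutative (@GRing.mul A)).
Variable rinv : forall x : A, x != 0 -> exists y, x * y = 1.

(* The hypotheses are arguments of the type so that the field structure
   below can be found by inference. *)
Definition comm_rinv_field of commutative (@GRing.mul A)
  & (forall x : A, x != 0 -> exists y, x * y = 1) : Type := A.
Local Notation F := (comm_rinv_field mulC rinv).

HB.instance Definition _ := GRing.NzRing.on F.
HB.instance Definition _ := GRing.PzRing_hasCommutativeMul.Build F mulC.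

Lemma exists_rinv_if_neq0 (x : A) : exists y : A, (x != 0) ==> (x * y == 1).
Proof.
have [x0|/rinv[y xy]] := eqVneq x 0; first by exists 0; rewrite x0.
by exists y; rewrite xy eqxx.
Qed.

Definition comm_rinv_field_inv (x : F) : F :=
  if x == 0 then 0 else xchoose (exists_rinv_if_neq0 x).

Lemma comm_rinv_field_mulVf (x : F) : x != 0 -> comm_rinv_field_inv x * x = 1.
Proof.
move=> x_neq0; rewrite /comm_rinv_field_inv ifN // mulrC.
by have /implyP/(_ x_neq0)/eqP := xchooseP (exists_rinv_if_neq0 x).
Qed.

Lemma comm_rinv_field_inv0 : comm_rinv_field_inv 0 = 0.
Proof. by rewrite /comm_rinv_field_inv ifT. Qed.

HB.instance Definition _ :=
  GRing.ComNzRing_isField.Build F comm_rinv_field_mulVf comm_rinv_field_inv0.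

End CommRinvField.

Lemma strongly_simple_act_rmorph (R : comNzRingType) (A B : nzRingType)
  (actA : R -> A -> A) (actB : R -> B -> B) (phi : {rmorphism A -> B}) :
  bijective phi -> (forall r a, phi (actA r a) = actB r (phi a)) ->
  strongly_simple_act actB -> strongly_simple_act actA.
Proof.
move=> [psi phiK psiK] phi_act SSB M [[M0 MD MZ] MM].
have psiD x y : psi (x + y) = psi x + psi y.
  by apply: (can_inj phiK); rewrite rmorphD !psiK.
have psiM x y : psi (x * y) = psi x * psi y.
  by apply: (can_inj phiK); rewrite rmorphM !psiK.
have psi0 : psi 0 = 0 by apply: (can_inj phiK); rewrite rmorph0 psiK.
have psiX a m : psi (a ^+ m) = psi a ^+ m.
  by apply: (can_inj phiK); rewrite rmorphXn !psiK.
have MM' : is_Mathieu_subspace actB (fun y => M (psi y)).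
  split; first split.
  - by rewrite psi0.
  - by move=> x y Mx My; rewrite psiD; apply: MD.
  - by move=> r x Mx; rewrite -[x]psiK -phi_act phiK; apply: MZ.
  move=> a Ha b c; have [|N HN] := MM (psi a) _ (psi b) (psi c).
    by move=> m m1; rewrite -psiX; apply: Ha.
  by exists N => m mN; rewrite !psiM psiX; apply: HN.
have [M0'|M1'] := SSB _ MM'; [left|right].
- move=> x; split=> [Mx|->] //; rewrite -[x]phiK -psi0.
  by congr psi; apply/M0'; rewrite phiK.
- by move=> x; rewrite -[x]phiK; apply: M1'.
Qed.

Lemma rmorph_inj_integral_domain (R : comNzRingType) (K : idomainType)
  (f : {rmorphism R -> K}) : injective f -> is_integral_domain R.
Proof.
move=> finj x y /(congr1 f); rewrite rmorphM rmorph0 => /eqP.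
by rewrite mulf_eq0 -!(rmorph0 f) !(inj_eq finj) => /orP[]/eqP; [left|right].
Qed.

Theorem theorem6p2 (R : comNzRingType) (A : algType R)
  (inj : injective (fun r : R => r%:A : A)) :
  strongly_simple A <->
  (is_integral_domain R /\
   exists (K : fieldType) (f : {rmorphism R -> K}),
     is_field_of_fractions f /\
     alg_iso_to A f /\
     strongly_simple_act (fun (r : R) (x : K) => f r * x)).
Proof.
split=> [SS|[_ [K [f [_ [[phi [phi_bij phi_act] SSK]]]]]]]; last first.
  exact: strongly_simple_act_rmorph phi_bij phi_act SSK.
pose F := comm_rinv_field (strongly_simple_mulrC SS) (strongly_simple_rinv SS).
pose f := in_alg A : {rmorphism R -> F}.
have finj : injective f := inj.
split; first exact: rmorph_inj_integral_domain finj.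
exists F, f; split; [split=> // x | split].
- have [r [s [r_neq0 rx]]] := strongly_simple_fraction SS x.
  exists s, r; split=> //=.
  by rewrite -rx -[r *: x]mulr_algl [_ * x]mulrC mulfK.
- exists (idfun : {rmorphism A -> F}); split; first by exists idfun.
  by move=> r a; rewrite /= mulr_algl.
- apply: (strongly_simple_act_rmorph (phi := idfun : {rmorphism F -> A}) _ _ SS).
    by exists idfun.
  by move=> r a; rewrite /= mulr_algl.
Qed.
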